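(* Let $e,n\geq 1$. A basis of $H^\bullet(\Gamma(e,e,n);\mathbb{Q})$ is naturally indexed by the orbits, under the action of $W=G(e,e,n)$, of the set of invariant $e$-multigraphs on $n$ vertices: for each such orbit with representative $\Delta$, the class $\sum_{w\in W}w(\omega_\Delta)$ is nonzero, and these classes form a basis, the class of $\Delta$ having degree equal to the number of edges of $\Delta$.
   Context: For a finite complex reflection group $W$ with hyperplane set $\mathcal A$, $P=\pi_1(\mathbb{C}^\ell\setminus\bigcup\mathcal A)$, $B=\pi_1((\mathbb{C}^\ell\setminus\bigcup\mathcal A)/W)$, $\Gamma=B/[P,P]$; then $H^\bullet(\Gamma;\mathbb{Q})\cong\Lambda^\bullet(\mathbb{Q}\mathcal A)^W$, where $H^1$ of $P^{ab}\cong\mathbb{Z}\mathcal A$ has basis the forms $d\log$ of the hyperplanes' linear forms and $W$ acts by permuting them. $G(e,e,n)$ is the group of $n\times n$ monomial matrices with nonzero entries in $\mu_e$ (the $e$-th roots of unity) whose product is $1$; $\Gamma(e,e,n)$ is $\Gamma$ for this group; its hyperplanes are $z_i=\zeta z_j$, $i<j$, $\zeta\in\mu_e$. $K_n(e)$ is the complete $e$-multigraph on $\{1,\dots,n\}$ with $e$ edges between each pair $i<j$, labelled by $\zeta\in\mu_e$; an $e$-multigraph on $n$ vertices is a subgraph (subset of edges) of $K_n(e)$. The edge $(i,j,\zeta)$ corresponds to the 1-form $\omega^{\zeta}_{i,j}=d\log(z_i-\zeta z_j)$, and a multigraph $\Delta$ to the wedge product $\omega_\Delta$ of its edges' forms ordered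 lexicographically in $(i,j,\zeta)$ (for a fixed order of $\mu_e$). $W$ acts on multigraphs through its action on hyperplanes. $\mathrm{Stab}_W(\Delta)$ is the subgroup of $W$ preserving $\Delta$; $\Delta$ is invariant if every element of $\mathrm{Stab}_W(\Delta)$ induces an even permutation of the edges of $\Delta$. *)

From mathcomp Require Import all_boot all_order all_fingroup all_algebra.
Set Implicit Arguments. Unset Strict Implicit. Unset Printing Implicit Defensive.
Import GRing.Theory.
Local Open Scope ring_scope.

(* Hyperplanes of G(e,e,n) = edges of K_n(e).                           *)
(* The edge (i,j,k) with i < j, k : 'I_e stands for the hyperplane       *)
(* z_i = zeta^k z_j, zeta = exp(2 pi i / e); it corresponds to the form  *)
(* omega^{zeta^k}_{i,j}.                                                *)
Definition edge_pred (n e : nat) (x : 'I_n * 'I_n * 'I_e) : bool :=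
  (x.1.1 < x.1.2)%N.
Definition edge (n e : nat) := {x : 'I_n * 'I_n * 'I_e | edge_pred x}.

(* Elements of G(e,e,n): pairs (s, a) standing for the monomial matrix  *)
(* sending the basis vector e_i to zeta^(a i) e_(s i); it lies in         *)
(* G(e,e,n) iff the product of its nonzero entries, zeta^(sum a), is 1.  *)
Definition welt (n e : nat) := ({perm 'I_n} * {ffun 'I_n -> 'I_e})%type.
Definition Wee (n e : nat) : {set welt n e} :=
  [set w : welt n e | ((\sum_i (w.2 i : nat)) %% e == 0)%N].

Lemma ord_gt0 (e : nat) (x : 'I_e) : (0 < e)%N.
Proof. exact: leq_ltn_trans (leq0n x) (ltn_ord x). Qed.

(* reduction mod e into 'I_e (e > 0 witnessed by an element of 'I_e) *)
Definition zmodI (e : nat) (x : 'I_e) (k : nat) : 'I_e :=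
  Ordinal (ltn_pmod k (ord_gt0 x)).

Lemma perm_lt_swap (n : nat) (s : {perm 'I_n}) (i j : 'I_n) :
  (i < j)%N -> ~~ (s i < s j)%N -> (s j < s i)%N.
Proof.
move=> hij hs; rewrite ltn_neqAle leqNgt hs andbT.
apply/negP=> /eqP/val_inj/perm_inj eji.
by move: hij; rewrite eji ltnn.
Qed.

(* Action of w = (s,a) on hyperplanes:  w maps {z_i = zeta^c z_j} to     *)
(* {y_(s i) = zeta^(c + a i - a j) y_(s j)}, rewritten with the smaller  *)
(* index first.                                                         *)
Definition act_edge (n e : nat) (w : welt n e) (x : edge n e) : edge n e :=
  let i := (val x).1.1 in let j := (val x).1.2 in let c := (val x).2 in
  let s := w.1 in let a := w.2 in
  match boolP (s i < s j)%N with
  | AltTrue h => @exist _ (@edge_pred n e) (s i, s j,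
                   zmodI c (c + a i + (e - a j))%N) h
  | AltFalse h => @exist _ (@edge_pred n e) (s j, s i,
                   zmodI c (a j + (e - a i) + (e - c))%N)
                   (perm_lt_swap (valP x) h)
  end.

Definition edge_lt (n e : nat) (x y : edge n e) : bool :=
  let: (i, j, k) := val x in let: (i', j', k') := val y in
  [|| (i < i')%N, (i == i' :> nat) && (j < j')%N
    | [&& (i == i' :> nat), (j == j' :> nat) & (k < k')%N]].
Definition edge_le (n e : nat) (x y : edge n e) : bool :=
  (x == y) || edge_lt x y.

Definition sorted_edges (n e : nat) (D : {set edge n e}) : seq (edge n e) :=
  sort (@edge_le n e) (enum D).

Fixpoint inversions (n e : nat) (s : seq (edge n e)) : nat :=
  match s with
  | [::] => 0
  | x :: s' => (count (fun y => edge_lt y x) s' + inversions s')%N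
  end.

(* The exterior algebra Lambda(Q A), with its standard basis e_S indexed *)
(* by the subsets S of A (e_S = wedge of the edges of S in lex order).   *)
Definition Lam (n e : nat) := {ffun {set edge n e} -> rat^o}.

Definition ebasis (n e : nat) (S : {set edge n e}) : Lam n e :=
  [ffun T => (T == S)%:R].

(* wedge product of the sequence of generators x_1 ^ ... ^ x_k *)
Definition wedge_seq (n e : nat) (s : seq (edge n e)) : Lam n e :=
  if uniq s then (-1) ^+ inversions s *: ebasis [set x in s] else 0.

Definition omega (n e : nat) (D : {set edge n e}) : Lam n e :=
  wedge_seq (sorted_edges D).

Definition actL (n e : nat) (w : welt n e) (v : Lam n e) : Lam n e :=
  \sum_(S : {set edge n e})
     v S *: wedge_seq (map (act_edge w) (sorted_edges S)).

Definition homog (n e : nat) (k : nat) (v : Lam n e) : Prop :=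
  forall S : {set edge n e}, #|S| <> k -> v S = 0.

Definition cls (n e : nat) (D : {set edge n e}) : Lam n e :=
  \sum_(w in Wee n e) actL w (omega D).

Definition mg_stab (n e : nat) (D : {set edge n e}) : {set welt n e} :=
  [set w in Wee n e | act_edge w @: D == D].

(* parity of the permutation of the edges of D induced by w (w in the
   stabiliser of D): inversion count of (w d_1, ..., w d_k), d_1<...<d_k *)
Definition mg_invariant (n e : nat) (D : {set edge n e}) : bool :=
  [forall w in mg_stab D,
     ~~ odd (inversions (map (act_edge w) (sorted_edges D)))].

Definition same_orbit (n e : nat) (D D' : {set edge n e}) : bool :=
  [exists w in Wee n e, act_edge w @: D == D'].

From mathcomp Require Import all_boot all_order all_fingroup all_algebra.
From mathcomp Require Import zify ring lra.
Import GRing.Theory Num.Theory.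
Set Implicit Arguments. Unset Strict Implicit. Unset Printing Implicit Defensive.
Local Open Scope ring_scope.

(** The group W permutes the standard basis of the exterior algebra up to sign:
    w(e_S) = eps(w, S) e_(wS), and eps is a cocycle because the parity of the
    inversions of a relabelled sequence of edges is the sign of the relabelling.
    Hence a W-invariant v satisfies v(wS) = eps(w, S) v(S).  If some element of
    Stab(S) acts on S by an odd permutation this forces v(S) = -v(S) = 0;
    otherwise v is constant up to sign on the orbit of S and is proportional to
    the orbit sum sum_w w(omega_S), whose coefficient at S is |Stab(S)| <> 0.
    Orbit sums of distinct orbits have disjoint supports, hence are free. *)

Fixpoint inversions_by (T : Type) (r : rel T) (s : seq T) : nat :=
  if s is x :: s' then (count (r^~ x) s' + inversions_by r s')%N else 0%N.

Lemma inversions_by_map (T U : Type) (r : rel U) (f : T -> U) (s : seq T) :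
  inversions_by r (map f s) = inversions_by (relpre f r) s.
Proof. by elim: s => //= x s ->; rewrite count_map. Qed.

Lemma odd_count_addb (T : Type) (p q : pred T) (s : seq T) :
  odd (count p s) (+) odd (count q s) = odd (count (fun y => p y (+) q y) s).
Proof.
elim: s => //= y s IH; rewrite !oddD -IH.
by case: (p y); case: (q y); case: (odd (count p s)); case: (odd (count q s)).
Qed.

Lemma odd_inversions_by_addb (T : Type) (r1 r2 : rel T) (s : seq T) :
  odd (inversions_by r1 s) (+) odd (inversions_by r2 s) =
  odd (inversions_by (fun y x => r1 y x (+) r2 y x) s).
Proof. by elim: s => //= x s IH; rewrite !oddD -odd_count_addb -IH addbACA. Qed.

Section SymmetricInversions.
Variables (T : eqType) (q : rel T).
Hypothesis q_sym : forall x y, x != y -> q x y = q y x.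

Lemma inversions_by_double (s : seq T) : uniq s ->
  (inversions_by q s).*2 = (\sum_(x <- s) count (fun y => (y != x) && q y x) s)%N.
Proof.
elim: s => [|x s IH]; first by rewrite big_nil.
rewrite /= big_cons eqxx => /andP[xs us].
have ->: count (fun y => (y != x) && q y x) s = count (q^~ x) s.
  by apply: eq_in_count => y ys /=; rewrite (memPn xs).
have ->: (\sum_(z <- s) count (fun y => (y != z) && q y z) (x :: s) =
          count (q^~ x) s + \sum_(z <- s) count (fun y => (y != z) && q y z) s)%N.
  rewrite /= big_split /=; congr (_ + _)%N.
  rewrite -sum1_count [RHS]big_mkcond; apply: eq_big_seq => z zs /=.
  by rewrite (memPnC xs) // q_sym ?(memPnC xs).
by rewrite /= doubleD IH // -!addnn; lia.
Qed.

Lemma inversions_by_perm (s t : seq T) :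
  uniq s -> perm_eq s t -> inversions_by q s = inversions_by q t.
Proof.
move=> us pst; have ut : uniq t by rewrite -(perm_uniq pst).
apply: double_inj; rewrite !inversions_by_double // (perm_big _ pst) /=.
by apply: eq_bigr => x _; apply/seq.permP.
Qed.

End SymmetricInversions.

Section InversionSign.
Variables (T : eqType) (r : rel T).
Hypothesis r_anti : forall x y, x != y -> r y x = ~~ r x y.

Lemma odd_inversions_by_map_perm (f : T -> T) (s t : seq T) :
  injective f -> uniq s -> perm_eq s t ->
  odd (inversions_by r (map f s)) (+) odd (inversions_by r s) =
  odd (inversions_by r (map f t)) (+) odd (inversions_by r t).
Proof.
move=> finj us pst; rewrite !inversions_by_map !odd_inversions_by_addb.
(* [r (f y) (f x) (+) r y x] is symmetric, so its inversion count ignores the order. *)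
apply: congr1; apply: inversions_by_perm => // x y xy.
have fxy : f x != f y by rewrite (inj_eq finj).
by rewrite /= (r_anti xy) (r_anti fxy) addbN addNb negbK.
Qed.

End InversionSign.

Section EdgeOrder.
Variables n e : nat.
Implicit Types x y : edge n e.

Lemma edge_ltE x y : edge_lt x y =
  [|| ((val x).1.1 < (val y).1.1)%N,
      ((val x).1.1 == (val y).1.1 :> nat) && ((val x).1.2 < (val y).1.2)%N
    | [&& ((val x).1.1 == (val y).1.1 :> nat), ((val x).1.2 == (val y).1.2 :> nat)
         & ((val x).2 < (val y).2)%N]].
Proof. by case: x => [[[i j] k] ?]; case: y => [[[i' j'] k'] ?]. Qed.

Lemma edge_eqE x y : (x == y) =
  [&& ((val x).1.1 == (val y).1.1 :> nat), ((val x).1.2 == (val y).1.2 :> nat)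
    & ((val x).2 == (val y).2 :> nat)].
Proof.
case: x => [[[i j] k] ?]; case: y => [[[i' j'] k'] ?] /=.
apply/eqP/and3P => [[-> -> ->] //|[/eqP/val_inj ii' /eqP/val_inj jj' /eqP/val_inj kk']].
by apply: val_inj; rewrite /= ii' jj' kk'.
Qed.

Lemma edge_lt_anti x y : x != y -> edge_lt y x = ~~ edge_lt x y.
Proof. rewrite !edge_ltE edge_eqE; lia. Qed.

Lemma edge_le_trans : transitive (@edge_le n e).
Proof. move=> y x z; rewrite /edge_le !edge_ltE !edge_eqE; lia. Qed.

Lemma edge_le_total : total (@edge_le n e).
Proof. move=> x y; rewrite /edge_le !edge_ltE !edge_eqE; lia. Qed.

Lemma inversionsE (s : seq (edge n e)) : inversions s = inversions_by (@edge_lt n e) s.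
Proof. by elim: s => //= x s ->. Qed.

Lemma inversions_sorted (s : seq (edge n e)) :
  sorted (@edge_le n e) s -> uniq s -> inversions s = 0%N.
Proof.
elim: s => //= x s IH xs_sorted /andP[xs us].
rewrite IH ?(path_sorted xs_sorted) // addn0 -(count_pred0 s).
apply: eq_in_count => y ys; have xy : x != y by apply: contraNneq xs => ->.
have /orP[/eqP xy' | x_lt_y] := allP (order_path_min edge_le_trans xs_sorted) y ys.
  by rewrite xy' eqxx in xy.
by rewrite /= edge_lt_anti // x_lt_y.
Qed.

End EdgeOrder.

Section ZpArith.
Variable e : nat.
Hypothesis e_gt1 : (1 < e)%N.

Lemma natr_Zp_mod k : (((k %% e)%N)%:R : 'Z_e) = k%:R.
Proof. by apply: ord_inj; rewrite !(val_Zp_nat e_gt1) modn_mod. Qed.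

Lemma natr_Zp_eq0 k : (k %% e == 0)%N = ((k%:R : 'Z_e) == 0).
Proof. by rewrite -(val_Zp_nat e_gt1) -val_eqE. Qed.

Lemma natr_Zp_subord (a : 'I_e) : (((e - a)%N)%:R : 'Z_e) = - (a : nat)%:R.
Proof. by rewrite natrB 1?ltnW // -(natr_Zp_mod e) modnn sub0r. Qed.

Lemma natr_Zp_submod k : (((e - k %% e)%N)%:R : 'Z_e) = - k%:R.
Proof. by rewrite (natr_Zp_subord (Ordinal (ltn_pmod k (ltnW e_gt1)))) natr_Zp_mod. Qed.

End ZpArith.

(* ['Z_1] is [Z/2], so the computation in ['Z_e] is only meaningful for [1 < e]. *)
Lemma eq_modn_natr_Zp (e k k' : nat) : (0 < e)%N ->
  ((1 < e)%N -> (k%:R : 'Z_e) = k'%:R) -> (k %% e = k' %% e)%N.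
Proof.
move=> e_gt0 kk'; have [e_gt1|e_le1] := ltnP 1 e.
  by rewrite -!(val_Zp_nat e_gt1) kk'.
have -> : e = 1%N by lia.
by rewrite !modn1.
Qed.

Lemma perm_ltNgt (n : nat) (s : {perm 'I_n}) (i j : 'I_n) :
  i != j -> (s j < s i)%N = ~~ (s i < s j)%N.
Proof.
move=> ij; have : s i != s j by rewrite (inj_eq perm_inj).
rewrite -val_eqE /=; lia.
Qed.

Section Group.
Variables n e : nat.
Implicit Types w : welt n e.

(* [wmul w1 w2] acts as [w1] after [w2]; a product of [{perm _}] applies its left
   factor first. *)
Definition wmul w1 w2 : welt n e :=
  ((w2.1 * w1.1)%g, [ffun i => zmodI (w2.2 i) (w2.2 i + w1.2 (w2.1 i))%N]).

Definition winv w : welt n e :=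
  ((w.1)^-1%g, [ffun i => zmodI (w.2 i) (e - w.2 ((w.1)^-1%g i))%N]).

Definition wone (e_gt0 : (0 < e)%N) : welt n e := (1%g, [ffun _ => Ordinal e_gt0]).

Lemma act_edgeE w (x : edge n e) : val (act_edge w x) =
  let: (i, j, c) := val x in
  if (w.1 i < w.1 j)%N then (w.1 i, w.1 j, zmodI c (c + w.2 i + (e - w.2 j))%N)
  else (w.1 j, w.1 i, zmodI c (w.2 j + (e - w.2 i) + (e - c))%N).
Proof.
case: x => [[[i j] c] ?]; rewrite /act_edge /=.
by case: {-}_ / boolP => h /=; rewrite ?h ?(negbTE h).
Qed.

Lemma act_edgeM w1 w2 (x : edge n e) :
  act_edge (wmul w1 w2) x = act_edge w1 (act_edge w2 x).
Proof.
apply: val_inj; rewrite !act_edgeE; case: x => [[[i j] c]]; rewrite /edge_pred /= => ij.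
have {}ij : i != j by rewrite neq_ltn ij.
have ij2 : w2.1 i != w2.1 j by rewrite (inj_eq perm_inj).
rewrite !permM !ffunE; case: (w2.1 i < w2.1 j)%N => /=; rewrite ?(perm_ltNgt _ ij2);
  case: (w1.1 (w2.1 i) < w1.1 (w2.1 j))%N => /=;
  by congr (_, _); apply: val_inj => /=; apply: (eq_modn_natr_Zp (ord_gt0 c)) => e_gt1;
     rewrite !(natrD, natr_Zp_submod e_gt1, natr_Zp_subord e_gt1, natr_Zp_mod e_gt1); ring.
Qed.

Lemma act_edge_id w (x : edge n e) :
  w.1 = 1%g -> (forall i, w.2 i = 0%N :> nat) -> act_edge w x = x.
Proof.
move=> w1 w2; apply: val_inj; rewrite act_edgeE.
case: x => [[[i j] c]]; rewrite /edge_pred /= w1 !perm1 !w2 => ->.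
by congr (_, _); apply: val_inj; rewrite /= addn0 subn0 modnDr modn_small.
Qed.

Lemma act_edge_inj w : injective (act_edge w).
Proof.
have wK x : act_edge (wmul (winv w) w) x = x.
  apply: act_edge_id => [|i]; first by rewrite /= mulgV.
  by rewrite /= !ffunE /= permK modnDmr subnKC ?modnn // ltnW.
by move=> x y /(congr1 (act_edge (winv w))); rewrite -!act_edgeM !wK.
Qed.

Lemma act_edge1 (e_gt0 : (0 < e)%N) (x : edge n e) : act_edge (wone e_gt0) x = x.
Proof. by apply: act_edge_id => // i; rewrite ffunE. Qed.

Lemma Wee1 (e_gt0 : (0 < e)%N) : wone e_gt0 \in Wee n e.
Proof. by rewrite inE big1 ?mod0n // => i _; rewrite ffunE. Qed.

Lemma Wee_mul w1 w2 : w1 \in Wee n e -> w2 \in Wee n e -> wmul w1 w2 \in Wee n e.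
Proof.
rewrite !inE; have [e_gt1|e_le1] := ltnP 1 e; last first.
  move=> _ _; rewrite big1 ?mod0n // => i _.
  have := ltn_ord ((wmul w1 w2).2 i); lia.
rewrite !natr_Zp_eq0 // !natr_sum => /eqP w1_0 /eqP w2_0.
under eq_bigr do rewrite ffunE natr_Zp_mod // natrD.
rewrite (reindex_inj (@perm_inj _ w2.1)) /= in w1_0.
by rewrite big_split /= w1_0 w2_0 addr0.
Qed.

Lemma wmul_inj w : injective (wmul w).
Proof.
move=> [s a] [s' a'] [] /mulIg <- /ffunP a_eq; congr (_, _); apply/ffunP => i.
move: (a_eq i); rewrite !ffunE => /(congr1 val) /= /eqP.
by rewrite eqn_modDr !modn_small // => /eqP /val_inj.
Qed.

Lemma wmul_Wee w : w \in Wee n e -> wmul w @: Wee n e = Wee n e.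
Proof.
move=> Ww; apply/eqP; rewrite eqEcard card_imset ?leqnn ?andbT; last exact: wmul_inj.
by apply/subsetP => _ /imsetP[u Wu ->]; apply: Wee_mul.
Qed.

Lemma Wee_wmulP w w' : w \in Wee n e -> w' \in Wee n e ->
  exists2 u, u \in Wee n e & w' = wmul w u.
Proof. by move=> Ww; rewrite -{1}(wmul_Wee Ww) => /imsetP. Qed.

Lemma imset_act_edgeM w1 w2 (S : {set edge n e}) :
  act_edge (wmul w1 w2) @: S = act_edge w1 @: (act_edge w2 @: S).
Proof. by rewrite -imset_comp; apply: eq_imset => x; rewrite act_edgeM. Qed.

Lemma imset_act_edge1 (e_gt0 : (0 < e)%N) (S : {set edge n e}) :
  act_edge (wone e_gt0) @: S = S.
Proof. by rewrite -[RHS]imset_id; apply: eq_imset => x; rewrite act_edge1. Qed.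

Lemma imset_act_edge_inj w : injective (fun S : {set edge n e} => act_edge w @: S).
Proof. exact: imset_inj (@act_edge_inj w). Qed.

End Group.

Section ExteriorAction.
Variables n e : nat.
Implicit Types (w : welt n e) (S T D : {set edge n e}) (v : Lam n e).

Definition act_sign w S : rat := (-1) ^+ inversions (map (act_edge w) (sorted_edges S)).

Lemma sorted_edges_uniq S : uniq (sorted_edges S).
Proof. by rewrite sort_uniq enum_uniq. Qed.

Lemma mem_sorted_edges S : sorted_edges S =i S.
Proof. by move=> x; rewrite mem_sort mem_enum. Qed.

Lemma inversions_sorted_edges S : inversions (sorted_edges S) = 0%N.
Proof.
apply: inversions_sorted (sorted_edges_uniq S).
exact: sort_sorted (@edge_le_total n e) _.
Qed.

Lemma map_act_sorted_edges_uniq w S : uniq (map (act_edge w) (sorted_edges S)).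
Proof. by rewrite map_inj_uniq ?sorted_edges_uniq //; apply: act_edge_inj. Qed.

Lemma mem_map_act_sorted_edges w S :
  map (act_edge w) (sorted_edges S) =i act_edge w @: S.
Proof.
move=> x; apply/mapP/imsetP => -[y]; rewrite ?mem_sorted_edges => Sy ->;
by exists y; rewrite ?mem_sorted_edges.
Qed.

Lemma wedge_seq_act_edge w S :
  wedge_seq (map (act_edge w) (sorted_edges S)) = act_sign w S *: ebasis (act_edge w @: S).
Proof.
rewrite /wedge_seq map_act_sorted_edges_uniq; congr (_ *: ebasis _).
by apply/setP => x; rewrite inE mem_map_act_sorted_edges.
Qed.

Lemma omegaE S : omega S = ebasis S.
Proof.
rewrite /omega /wedge_seq sorted_edges_uniq inversions_sorted_edges scale1r.
by congr ebasis; apply/setP => x; rewrite inE mem_sorted_edges.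
Qed.

Lemma scale_ratoE (a b : rat) : a *: (b : rat^o) = a * b.
Proof. by []. Qed.

Lemma ebasisE S T : ebasis S T = (T == S)%:R.
Proof. by rewrite ffunE. Qed.

Lemma actLE w v : actL w v = \sum_S (v S * act_sign w S) *: ebasis (act_edge w @: S).
Proof. by apply: eq_bigr => S _; rewrite wedge_seq_act_edge scalerA. Qed.

Lemma actL_ebasis w S : actL w (ebasis S) = act_sign w S *: ebasis (act_edge w @: S).
Proof.
rewrite actLE (bigD1 S) //= big1 ?addr0; first by rewrite ebasisE eqxx mul1r.
by move=> S' S'S; rewrite ebasisE (negbTE S'S) mul0r scale0r.
Qed.

Lemma actL_coef w v S : actL w v (act_edge w @: S) = act_sign w S * v S.
Proof.
rewrite actLE sum_ffunE (bigD1 S) //= big1 ?addr0.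
  by rewrite ffunE ebasisE eqxx scale_ratoE mulr1 mulrC.
move=> S' S'S; rewrite ffunE ebasisE scale_ratoE.
by rewrite (inj_eq (@imset_act_edge_inj n e w)) eq_sym (negbTE S'S) mulr0.
Qed.

Lemma actLD w : {morph actL w : u v / u + v}.
Proof.
move=> u v; rewrite /actL -big_split /=; apply: eq_bigr => S _.
by rewrite ffunE scalerDl.
Qed.

Lemma actL0 w : actL w 0 = 0.
Proof. by rewrite /actL big1 // => S _; rewrite ffunE scale0r. Qed.

Lemma actLZ w (a : rat) v : actL w (a *: v) = a *: actL w v.
Proof.
rewrite /actL scaler_sumr; apply: eq_bigr => S _.
by rewrite ffunE scalerA.
Qed.

Lemma actL_sum w (I : Type) (r : seq I) (P : pred I) (F : I -> Lam n e) :
  actL w (\sum_(i <- r | P i) F i) = \sum_(i <- r | P i) actL w (F i).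
Proof. exact: (big_morph _ (actLD w) (actL0 w)). Qed.

Lemma act_sign_mul w w' S :
  act_sign (wmul w w') S = act_sign w' S * act_sign w (act_edge w' @: S).
Proof.
set s := map (act_edge w') (sorted_edges S).
have s_perm : perm_eq s (sorted_edges (act_edge w' @: S)).
  apply: uniq_perm; rewrite ?map_act_sorted_edges_uniq ?sorted_edges_uniq // => x.
  by rewrite mem_map_act_sorted_edges mem_sorted_edges.
have := odd_inversions_by_map_perm (@edge_lt_anti n e) (@act_edge_inj n e w)
  (map_act_sorted_edges_uniq w' S) s_perm.
rewrite -!inversionsE inversions_sorted_edges addbF /act_sign => sign_eq.
have -> : map (act_edge (wmul w w')) (sorted_edges S) = map (act_edge w) s.
  by rewrite -map_comp; apply: eq_map => x; rewrite act_edgeM.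
rewrite -[LHS]signr_odd -[X in _ * X]signr_odd -[X in X * _]signr_odd.
by rewrite -signr_addb -sign_eq addbC -addbA addbb addbF.
Qed.

Lemma actL_ebasisM w w' S :
  actL w (actL w' (ebasis S)) = actL (wmul w w') (ebasis S).
Proof.
rewrite !actL_ebasis actLZ actL_ebasis scalerA imset_act_edgeM act_sign_mul.
by rewrite mulrC.
Qed.

Lemma cls_coef D T :
  cls D T = \sum_(w in Wee n e | act_edge w @: D == T) act_sign w D.
Proof.
rewrite sum_ffunE big_mkcondr /=; apply: eq_bigr => w _.
rewrite omegaE actL_ebasis ffunE ebasisE eq_sym scale_ratoE.
by case: eqP; rewrite ?mulr1 ?mulr0.
Qed.

Lemma actL_cls w D : w \in Wee n e -> actL w (cls D) = cls D.
Proof.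
move=> Ww; rewrite /cls actL_sum.
under eq_bigr do rewrite omegaE actL_ebasisM.
rewrite -[in RHS](wmul_Wee Ww) big_imset /=; last by move=> ? ? _ _; apply: wmul_inj.
by under [RHS]eq_bigr do rewrite omegaE.
Qed.

Lemma span_cls_invariant (Ds : seq {set edge n e}) v w :
  v \in <<[seq cls D | D <- Ds]>>%VS -> w \in Wee n e -> actL w v = v.
Proof.
move=> v_span Ww; rewrite (@coord_span _ _ _ (in_tuple _) _ v_span) actL_sum.
apply: eq_bigr => i _; rewrite actLZ.
have /mapP[D _ ->] : [seq cls D | D <- Ds]`_i \in [seq cls D | D <- Ds].
  exact: mem_nth (ltn_ord i).
by rewrite actL_cls.
Qed.

End ExteriorAction.

Section Orbits.
Variables n e : nat.
Hypothesis e_gt0 : (0 < e)%N.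
Implicit Types (w : welt n e) (S T D : {set edge n e}).

Definition transporter D T : {set welt n e} := [set w in Wee n e | act_edge w @: D == T].

Lemma same_orbitP D T :
  reflect (exists2 w, w \in Wee n e & act_edge w @: D = T) (same_orbit D T).
Proof.
apply: (iffP existsP) => [[w /andP[Ww /eqP wD]]|[w Ww wD]]; first by exists w.
by exists w; rewrite Ww wD eqxx.
Qed.

Lemma same_orbit_sym D T : same_orbit D T -> same_orbit T D.
Proof.
case/same_orbitP => w Ww wD; have [u Wu wu1] := Wee_wmulP Ww (Wee1 n e_gt0).
apply/same_orbitP; exists u => //; apply: (@imset_act_edge_inj n e w).
by rewrite /= -imset_act_edgeM -wu1 imset_act_edge1 wD.
Qed.

Lemma same_orbit_trans D1 D2 D3 :
  same_orbit D1 D2 -> same_orbit D2 D3 -> same_orbit D1 D3.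
Proof.
case/same_orbitP => w1 Ww1 w1D; case/same_orbitP => w2 Ww2 w2D.
apply/same_orbitP; exists (wmul w2 w1); first exact: Wee_mul.
by rewrite imset_act_edgeM w1D w2D.
Qed.

Lemma transporterE w0 D T : w0 \in Wee n e -> act_edge w0 @: D = T ->
  transporter D T = wmul w0 @: mg_stab D.
Proof.
move=> Ww0 w0D; apply/setP => w; rewrite inE; apply/andP/imsetP.
  case=> Ww /eqP wD; have [u Wu w_eq] := Wee_wmulP Ww0 Ww; subst w.
  exists u => //; rewrite inE Wu /=; apply/eqP/(@imset_act_edge_inj n e w0).
  by rewrite /= -imset_act_edgeM wD w0D.
case=> u; rewrite inE => /andP[Wu /eqP uD] ->; split; first exact: Wee_mul.
by rewrite imset_act_edgeM uD w0D.
Qed.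

Lemma card_transporter D T : same_orbit D T -> #|transporter D T| = #|mg_stab D|.
Proof.
case/same_orbitP => w0 Ww0 w0D.
by rewrite (transporterE Ww0 w0D) card_imset //; apply: wmul_inj.
Qed.

Lemma mg_stab_gt0 D : (0 < #|mg_stab D|)%N.
Proof.
by apply/card_gt0P; exists (wone n e_gt0); rewrite inE Wee1 imset_act_edge1 /=.
Qed.

Lemma act_sign_stab D w : mg_invariant D -> w \in mg_stab D -> act_sign w D = 1.
Proof.
by move=> /forallP/(_ w)/implyP D_inv /D_inv; rewrite /act_sign -signr_odd => /negbTE ->.
Qed.

Lemma cls_coef_self D : mg_invariant D -> cls D D = #|mg_stab D|%:R.
Proof.
move=> D_inv; rewrite cls_coef -sumr_const.
apply: eq_big => [w|w w_stab]; first by rewrite !inE.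
by apply: act_sign_stab; rewrite // inE.
Qed.

Lemma cls_coef_self_neq0 D : mg_invariant D -> cls D D != 0.
Proof.
by move=> D_inv; rewrite cls_coef_self // pnatr_eq0 -lt0n mg_stab_gt0.
Qed.

Lemma cls_neq0 D : mg_invariant D -> cls D != 0.
Proof. by move/cls_coef_self_neq0; apply: contraNneq => ->; rewrite ffunE. Qed.

Lemma cls_coef_out D T : ~~ same_orbit D T -> cls D T = 0.
Proof.
move=> DT; rewrite cls_coef big1 // => w /andP[Ww /eqP wD].
by case/negP: DT; apply/same_orbitP; exists w.
Qed.

Lemma cls_homog D : homog #|D| (cls D).
Proof.
move=> S DS; rewrite cls_coef big1 // => w /andP[_ /eqP wD].
by case: DS; rewrite -wD card_imset //; apply: act_edge_inj.
Qed.

End Orbits.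

Section Invariants.
Variables n e : nat.
Variable v : Lam n e.
Hypothesis v_inv : forall w : welt n e, w \in Wee n e -> actL w v = v.
Implicit Types (w : welt n e) (S T D : {set edge n e}).

Lemma invariant_coef w S : w \in Wee n e -> v (act_edge w @: S) = act_sign w S * v S.
Proof. by move=> Ww; rewrite -{1}(v_inv Ww) actL_coef. Qed.

Lemma invariant_coef_eq0 T : ~~ mg_invariant T -> v T = 0.
Proof.
case/forallPn => w; rewrite negb_imply negbK inE => /andP[/andP[Ww /eqP wT] w_odd].
by move: (invariant_coef T Ww); rewrite wT /act_sign -signr_odd w_odd; lra.
Qed.

Lemma invariant_coef_orbit D T :
  same_orbit D T -> v D * cls D T = #|mg_stab D|%:R * v T.
Proof.
move=> DT; rewrite cls_coef mulr_sumr -(card_transporter DT) mulr_natl -sumr_const.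
apply: eq_big => [w|w /andP[Ww /eqP wD]]; first by rewrite [RHS]inE.
by rewrite -wD invariant_coef // mulrC.
Qed.

End Invariants.

Section Representatives.
Variables n e : nat.
Hypothesis e_gt0 : (0 < e)%N.
Variable R : {set {set edge n e}}.
Hypothesis R_invariant : forall D, D \in R -> mg_invariant D.
Hypothesis R_cover : forall D, mg_invariant D -> exists2 D', D' \in R & same_orbit D' D.
Hypothesis R_disjoint :
  forall D D', D \in R -> D' \in R -> same_orbit D D' -> D = D'.

Lemma free_cls : free [seq cls D | D <- enum R].
Proof.
apply/freeP => k sum_eq0 i; pose D (j : 'I_#|R|) := nth set0 (enum R) j.
have RD j : D j \in R by rewrite -mem_enum mem_nth // -cardE.
have clsD (j : 'I_#|R|) : [seq cls D | D <- enum R]`_j = cls (D j).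
  by rewrite (nth_map set0) // -cardE.
move/ffunP/(_ (D i)): sum_eq0; rewrite sum_ffunE (bigD1 i) //= big1 ?addr0.
  rewrite !ffunE scale_ratoE clsD => /eqP; rewrite mulf_eq0 => /orP[/eqP //|].
  by rewrite (negbTE (cls_coef_self_neq0 e_gt0 (R_invariant (RD i)))).
move=> j ji; rewrite !ffunE scale_ratoE clsD cls_coef_out ?mulr0 //.
apply: contra ji => /(R_disjoint (RD j) (RD i)) /eqP.
by rewrite nth_uniq ?enum_uniq -?cardE // => /eqP/val_inj->.
Qed.

Lemma invariant_decomposition v : (forall w, w \in Wee n e -> actL w v = v) ->
  v = \sum_(D in R) (v D / #|mg_stab D|%:R) *: cls D.
Proof.
move=> v_inv; apply/ffunP => T; rewrite sum_ffunE.
have coefE D : ((v D / #|mg_stab D|%:R) *: cls D) T = (same_orbit D T)%:R * v T.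
  rewrite ffunE scale_ratoE; have [DT|DT] := boolP (same_orbit D T).
    rewrite mul1r mulrAC invariant_coef_orbit // mulrC mulKf //.
    by rewrite pnatr_eq0 -lt0n mg_stab_gt0.
  by rewrite cls_coef_out ?mulr0 ?mul0r.
under eq_bigr do rewrite coefE.
have [D0 /andP[RD0 D0T]|no_rep] := pickP [pred D in R | same_orbit D T].
  rewrite (bigD1 D0) //= D0T mul1r big1 ?addr0 // => D /andP[RD DD0].
  suff -> : same_orbit D T = false by rewrite mul0r.
  apply: contraNF DD0 => DT; apply/eqP/R_disjoint => //.
  exact: same_orbit_trans DT (same_orbit_sym e_gt0 D0T).
rewrite big1 => [|D RD]; last by have := no_rep D; rewrite /= RD /= => ->; rewrite mul0r.
apply: (invariant_coef_eq0 v_inv); apply/negP => /R_cover[D RD DT].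
by move: (no_rep D); rewrite /= RD DT.
Qed.

Lemma invariant_in_span v : (forall w, w \in Wee n e -> actL w v = v) ->
  v \in <<[seq cls D | D <- enum R]>>%VS.
Proof.
move/invariant_decomposition->; apply: memv_suml => D RD.
by apply/memvZ/memv_span/map_f; rewrite mem_enum.
Qed.

End Representatives.

Theorem theorem3p13 (e n : nat) (he : (1 <= e)%N) (hn : (1 <= n)%N)
  (R : {set {set edge n e}})
  (hRinv : forall D, D \in R -> mg_invariant D)
  (hRcov : forall D, mg_invariant D -> exists2 D', D' \in R & same_orbit D' D)
  (hRdisj : forall D D', D \in R -> D' \in R -> same_orbit D D' -> D = D') :
  [/\ forall D, D \in R -> cls D != 0,
      forall D, D \in R -> homog #|D| (cls D),
      free [seq cls D | D <- enum R]
    & forall v : Lam n e,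
        (forall w, w \in Wee n e -> actL w v = v) <->
        v \in <<[seq cls D | D <- enum R]>>%VS ].
Proof.
split.
- by move=> D /hRinv; apply: cls_neq0.
- by move=> D _; apply: cls_homog.
- exact: free_cls.
- move=> v; split; first exact: invariant_in_span.
  by move=> v_span w; apply: span_cls_invariant v_span.
Qed.
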